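(* Let $V$ be a finite set of voters, $A$ a finite set of alternatives, and $F:\mathcal{P}(V,A)\to 2^A\setminus\{\emptyset\}$ a social choice correspondence. The following two conditions are equivalent: (1) $F$ is onto with respect to singletons, is strategy-proof for optimists (SPO), and is strategy-proof for pessimists (SPP). (2) $F$ is onto with respect to singletons, and there exist, for each voter $i\in V$, functions $p_i:\mathcal{P}(V,A)\times A\times 2^A\to[0,1]$ such that (a) for every profile $P$ and every nonempty $X\subseteq A$, $\sum_{x\in X}p_i(P,x,X)=1$; (b) for every profile $P$, every nonempty $X\subseteq A$ and every $a\in X$, $p_i(P,a,X)>0$ whenever $a=\mathrm{best}(P_i,X)$ or $a=\mathrm{worst}(P_i,X)$, where $P_i$ is voter $i$'s ballot in $P$; (c) for every voter $i$, every profile $P=P_iP_{-i}$, every linear order $P_i'$ over $A$, and every utility function $u_i:A\to\mathbb{R}$ consistent with $P_i$ (i.e. $u_i(a)>u_i(b)$ whenever $a\succ_i b$ in $P_i$), $$\sum_{x\in F(P_iP_{-i})}p_i\big(P_iP_{-i},x,F(P_iP_{-i})\big)\,u_i(x)\;\geq\;\sum_{x\in F(P_i'P_{-i})}p_i\big(P_iP_{-i},x,F(P_i'P_{-i})\big)\,u_i(x).$$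
   Context: $V$ is a finite set of voters and $A$ a finite set of alternatives. A profile $P$ assigns to every voter $i\in V$ a linear order $P_i$ over $A$ (a ballot); $\succ_i$ denotes the strict order of $P_i$ and $\succeq_i$ its reflexive version. $\mathcal{P}(V,A)$ is the set of all profiles. $P_{-i}$ denotes the ballots of all voters other than $i$, so $P=P_iP_{-i}$, and $P_i'P_{-i}$ is the profile obtained from $P$ by replacing $P_i$ with the linear order $P_i'$. A social choice correspondence is a map $F:\mathcal{P}(V,A)\to 2^A\setminus\{\emptyset\}$. $F$ is onto with respect to singletons if for every $a\in A$ there is a profile $P$ with $F(P)=\{a\}$. For nonempty $W\subseteq A$, $\mathrm{best}(P_i,W)$ and $\mathrm{worst}(P_i,W)$ denote the $P_i$-best and $P_i$-worst elements of $W$. Define weak orders on nonempty subsets of $A$: $X\succeq_i^O Y$ iff $\mathrm{best}(P_i,X)\succeq_i\mathrm{best}(P_i,Y)$; $X\succeq_i^P Y$ iff $\mathrm{worst}(P_i,X)\succeq_i\mathrm{worst}(P_i,Y)$. $F$ is strategy-proof for optimists (SPO) if for every voter $i$, every profile $P_iP_{-i}$ and every linear order $P_i'$, $F(P_iP_{-i})\succeq_i^O F(P_i'P_{-i})$ (with $\succeq_i$ taken from the sincere ballot $P_i$). $F$ is strategy-proof for pessimists (SPP) if for every voter $i$, every profile $P_iP_{-i}$ and every linear order $P_i'$, $F(P_iP_{-i})\succeq_i^P F(P_i'P_{-i})$. *)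

From Stdlib Require Import Reals.
From mathcomp Require Import all_boot.
Set Implicit Arguments. Unset Strict Implicit. Unset Printing Implicit Defensive.

Section Voting.
Variables (V A : finType).

Definition strict_linorder (r : rel A) : Prop :=
  (forall x, ~~ r x x) /\
  (forall x y z, r x y -> r y z -> r x z) /\
  (forall x y, x != y -> r x y \/ r y x).

Definition ballot := {r : rel A | strict_linorder r}.

Definition succ (b : ballot) (x y : A) : bool := proj1_sig b x y.
Definition succeq (b : ballot) (x y : A) : bool := (x == y) || succ b x y.

Definition profile := V -> ballot.

Definition upd (P : profile) (i : V) (b : ballot) : profile :=
  fun j => if j == i then b else P j.

Definition is_best (b : ballot) (X : {set A}) (a : A) : Prop :=
  a \in X /\ forall y, y \in X -> succeq b a y.
Definition is_worst (b : ballot) (X : {set A}) (a : A) : Prop :=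
  a \in X /\ forall y, y \in X -> succeq b y a.

Definition SCC := profile -> {set A}.

Definition scc_nonempty (F : SCC) : Prop := forall P, F P != set0.

Definition onto_singletons (F : SCC) : Prop :=
  forall a : A, exists P, F P = [set a].

Definition optimist_geq (b : ballot) (X Y : {set A}) : Prop :=
  forall x y, is_best b X x -> is_best b Y y -> succeq b x y.
Definition pessimist_geq (b : ballot) (X Y : {set A}) : Prop :=
  forall x y, is_worst b X x -> is_worst b Y y -> succeq b x y.

Definition SPO (F : SCC) : Prop :=
  forall (i : V) (P : profile) (b' : ballot),
    optimist_geq (P i) (F P) (F (upd P i b')).
Definition SPP (F : SCC) : Prop :=
  forall (i : V) (P : profile) (b' : ballot),
    pessimist_geq (P i) (F P) (F (upd P i b')).

Definition consistent_utility (b : ballot) (u : A -> R) : Prop :=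
  forall x y, succ b x y -> Rgt (u x) (u y).

Definition exp_util (p : profile -> A -> {set A} -> R) (P : profile)
  (X : {set A}) (u : A -> R) : R :=
  \big[Rplus/R0]_(x in X) (Rmult (p P x X) (u x)).

Definition has_prob_representation (F : SCC) : Prop :=
  exists p : V -> profile -> A -> {set A} -> R,
    (forall i P x X, Rle 0 (p i P x X) /\ Rle (p i P x X) 1) /\
    (forall i P (X : {set A}), X != set0 ->
        \big[Rplus/R0]_(x in X) p i P x X = R1) /\
    (forall i P (X : {set A}) a, X != set0 -> a \in X ->
        (is_best (P i) X a \/ is_worst (P i) X a) -> Rgt (p i P a X) 0) /\
    (forall i P (b' : ballot) (u : A -> R), consistent_utility (P i) u ->
        Rge (exp_util (p i) P (F P) u) (exp_util (p i) P (F (upd P i b')) u)).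

End Voting.

(* (1) => (2): let p_i put weight 1/2 on the best and 1/2 on the worst element
   of a set (weight 1 when they coincide).  The expected utility of F(P) is then
   the average of the utilities of its best and worst elements, each of which
   can only get worse under a manipulation by SPO and SPP.
   (2) => (1): if an optimist could profit, the best element y of F(P_i'P_{-i})
   is strictly preferred to everything in F(P).  A consistent utility that jumps
   by a huge amount M at y (on top of the rank) makes the
   expected utility of F(P_i'P_{-i}) at least M p_i(y) > |A|, while that of F(P)
   stays below |A|, contradicting (c).  The pessimist case is the same argument
   for the reversed ballot and the negated utility. *)
From HB Require Import structures.
From Stdlib Require Import Reals Lra.
From mathcomp Require Import all_boot.
Set Implicit Arguments. Unset Strict Implicit. Unset Printing Implicit Defensive.

HB.instance Definition _ := Monoid.isComLaw.Build R R0 Rplus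
  (fun x y z => esym (Rplus_assoc x y z)) Rplus_comm Rplus_0_l.

Local Open Scope R_scope.

Section WeightedSums.
Variable T : finType.
Implicit Types (X : {set T}) (w u : T -> R).

Definition expect w X u : R := \big[Rplus/R0]_(x in X) (w x * u x).

Definition lottery_on w X : Prop :=
  (forall x, x \in X -> 0 <= w x) /\ \big[Rplus/R0]_(x in X) w x = 1.

Lemma expectN w X u : expect w X (fun x => - u x) = - expect w X u.
Proof. by rewrite /expect; elim/big_rec2: _ => [|x a b _ ->]; ring. Qed.

Lemma expect_le_bound w X u c : lottery_on w X ->
  (forall x, x \in X -> u x <= c) -> expect w X u <= c.
Proof.
case=> w_ge0 w_sum u_le.
have -> : c = \big[Rplus/R0]_(x in X) (w x * c).
  by rewrite -[LHS]Rmult_1_l -w_sum; elim/big_rec2: _ => [|x a b _ <-]; ring.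
rewrite /expect; elim/big_rec2: _ => [|x a b xX ab]; first lra.
by have := w_ge0 x xX; have := u_le x xX; nra.
Qed.

Lemma expect_ge_point w X u y : y \in X ->
  (forall x, x \in X -> 0 <= w x /\ 0 <= u x) -> w y * u y <= expect w X u.
Proof.
move=> yX ge0; rewrite /expect (bigD1 y) //=.
suff : 0 <= \big[Rplus/R0]_(x in X | x != y) (w x * u x) by lra.
elim/big_rec: _ => [|x a /andP[xX _] a_ge0]; first lra.
by have [] := ge0 x xX; nra.
Qed.

End WeightedSums.

Section Ballots.
Variable A : finType.
Implicit Types (b : ballot A) (X Y : {set A}) (u : A -> R).

Lemma succ_irr b x : ~~ succ b x x.
Proof. exact: (proj1 (proj2_sig b)). Qed.

Lemma succ_trans b x y z : succ b x y -> succ b y z -> succ b x z.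
Proof. exact: (proj1 (proj2 (proj2_sig b))). Qed.

Lemma succ_total b x y : x != y -> succ b x y \/ succ b y x.
Proof. exact: (proj2 (proj2 (proj2_sig b))). Qed.

Lemma succeqxx b x : succeq b x x.
Proof. by rewrite /succeq eqxx. Qed.

Lemma succ_succeq_trans b x y z : succ b x y -> succeq b y z -> succ b x z.
Proof. by move=> xy /orP[/eqP <-|yz] //; exact: succ_trans xy yz. Qed.

Lemma succ_nsucceq b x y : succ b x y -> ~~ succeq b y x.
Proof.
move=> xy; apply/negP=> yx.
by move/negP: (succ_irr b x); apply; exact: succ_succeq_trans xy yx.
Qed.

Lemma nsucceq_succ b x y : ~~ succeq b x y -> succ b y x.
Proof.
rewrite /succeq negb_or => /andP[xy nxy].
by case: (succ_total b xy) => // bxy; rewrite bxy in nxy.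
Qed.

Lemma succeq_anti b x y : succeq b x y -> succeq b y x -> x = y.
Proof.
case/orP=> [/eqP //|xy] yx.
by move: (succ_nsucceq xy); rewrite yx.
Qed.

Lemma consistent_utility_succeq b u x y :
  consistent_utility b u -> succeq b x y -> u y <= u x.
Proof. by move=> u_cons /orP[/eqP ->|/u_cons]; lra. Qed.

(* A consistent utility with values in [0, |A|]. *)
Definition rank b x : nat := #|[pred y | succ b x y]|.

Lemma rank_lt b x y : succ b x y -> (rank b y < rank b x)%N.
Proof.
move=> xy; apply: proper_card; apply/properP; split.
  by apply/subsetP=> z; rewrite !inE; exact: succ_trans xy.
by exists y; rewrite !inE ?succ_irr.
Qed.

Lemma INR_rank_lt b x y : succ b x y -> INR (rank b y) < INR (rank b x).
Proof. by move/rank_lt/ltP; exact: lt_INR. Qed.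

Lemma rank_bounds b x : 0 <= INR (rank b x) <= INR #|A|.
Proof. by split; [exact: pos_INR | apply/le_INR/leP/max_card]. Qed.

Lemma exists_best b X : X != set0 -> exists x, is_best b X x.
Proof.
case/set0Pn=> x0 x0X; case: (arg_maxnP (rank b) x0X) => x xX x_max.
exists x; split=> // y yX; apply: contraT => /nsucceq_succ yx.
by move: (x_max y yX); rewrite /= leqNgt (rank_lt yx).
Qed.

Lemma exists_worst b X : X != set0 -> exists x, is_worst b X x.
Proof.
case/set0Pn=> x0 x0X; case: (arg_minnP (rank b) x0X) => x xX x_min.
exists x; split=> // y yX; apply: contraT => /nsucceq_succ xy.
by move: (x_min y yX); rewrite /= leqNgt (rank_lt xy).
Qed.

Definition bestb b X x := (x \in X) && [forall y in X, succeq b x y].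
Definition worstb b X x := (x \in X) && [forall y in X, succeq b y x].

Lemma bestbP b X x : reflect (is_best b X x) (bestb b X x).
Proof. by apply: (iffP andP) => -[xX /forall_inP]. Qed.

Lemma worstbP b X x : reflect (is_worst b X x) (worstb b X x).
Proof. by apply: (iffP andP) => -[xX /forall_inP]. Qed.

Lemma bestbE b X x0 x : is_best b X x0 -> bestb b X x = (x == x0).
Proof.
move=> [x0X x0_best]; apply/bestbP/eqP => [[xX x_best]|->]; last by [].
by apply: succeq_anti; [exact: x_best | exact: x0_best].
Qed.

Lemma worstbE b X x0 x : is_worst b X x0 -> worstb b X x = (x == x0).
Proof.
move=> [x0X x0_worst]; apply/worstbP/eqP => [[xX x_worst]|->]; last by [].
by apply: succeq_anti; [exact: x0_worst | exact: x_worst].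
Qed.

Lemma rev_ballot_linorder b : strict_linorder (fun x y => succ b y x).
Proof.
split; [exact: succ_irr | split].
- by move=> x y z yx zy; exact: succ_trans zy yx.
- by move=> x y xy; case: (succ_total b xy); [right | left].
Qed.

Definition rev_ballot b : ballot A := exist _ _ (rev_ballot_linorder b).

Lemma succeq_rev b x y : succeq (rev_ballot b) x y = succeq b y x.
Proof. by rewrite /succeq eq_sym. Qed.

Lemma is_best_rev b X x : is_best (rev_ballot b) X x <-> is_worst b X x.
Proof. by split=> -[xX x_ext]; split=> // y /x_ext; rewrite succeq_rev. Qed.

Lemma consistent_utility_rev b u :
  consistent_utility b u -> consistent_utility (rev_ballot b) (fun x => - u x).
Proof. by move=> u_cons x y /u_cons; lra. Qed.

Lemma optimist_geq_of_expect b X Y (wX wY : A -> R) :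
  lottery_on wX X -> (forall y, y \in Y -> 0 <= wY y) ->
  (forall y, is_best b Y y -> 0 < wY y) ->
  (forall u, consistent_utility b u -> expect wY Y u <= expect wX X u) ->
  optimist_geq b X Y.
Proof.
move=> wX_lot wY_ge0 wY_best exp_le x y [xX x_best] y_best.
apply: contraT => /nsucceq_succ yx.
have wy_gt0 := wY_best y y_best; have n_ge0 : 0 <= INR #|A| := pos_INR _.
set M := (INR #|A| + 1) / wY y.
have wyM : wY y * M = INR #|A| + 1 by rewrite /M; field; lra.
have M_ge0 : 0 <= M by nra.
pose u z := INR (rank b z) + (if succeq b z y then M else 0).
have u_cons : consistent_utility b u.
  move=> z z' zz'; rewrite /u; have := INR_rank_lt zz'.
  case: ifP => zy; case: ifP => z'y; try lra.
  by move: zy; rewrite /succeq (succ_succeq_trans zz' z'y) orbT.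
have uX_le : expect wX X u <= INR #|A|.
  apply: expect_le_bound => // z zX; rewrite /u ifN; first by have := rank_bounds b z; lra.
  exact/succ_nsucceq/(succ_succeq_trans yx)/x_best.
have uY_ge : INR #|A| + 1 <= expect wY Y u.
  have uY_ge0 z : z \in Y -> 0 <= wY z /\ 0 <= u z.
    by move=> zY; split; [exact: wY_ge0 | rewrite /u; case: ifP; have := rank_bounds b z; lra].
  rewrite -wyM; apply: Rle_trans (expect_ge_point (proj1 y_best) uY_ge0).
  by apply: Rmult_le_compat_l; [lra | rewrite /u succeqxx; have := rank_bounds b y; lra].
by have := exp_le u u_cons; lra.
Qed.

Lemma pessimist_geq_of_expect b X Y (wX wY : A -> R) :
  (forall x, x \in X -> 0 <= wX x) -> (forall x, is_worst b X x -> 0 < wX x) ->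
  lottery_on wY Y ->
  (forall u, consistent_utility b u -> expect wY Y u <= expect wX X u) ->
  pessimist_geq b X Y.
Proof.
move=> wX_ge0 wX_worst wY_lot exp_le x y x_worst y_worst.
rewrite -succeq_rev.
apply: (optimist_geq_of_expect (b := rev_ballot b) wY_lot wX_ge0) => //.
- by move=> z /is_best_rev; exact: wX_worst.
- by move=> u /consistent_utility_rev /exp_le; rewrite !expectN; lra.
- exact/is_best_rev.
- exact/is_best_rev.
Qed.

Definition best_worst_lottery b X x : R :=
  (if bestb b X x then / 2 else 0) + (if worstb b X x then / 2 else 0).

Lemma expect_best_worst_lottery b X u xb xw : is_best b X xb -> is_worst b X xw ->
  expect (best_worst_lottery b X) X u = (u xb + u xw) / 2.
Proof.
move=> xb_best xw_worst; rewrite /expect.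
under eq_bigr=> x _ do rewrite /best_worst_lottery (bestbE _ xb_best)
  (worstbE _ xw_worst) Rmult_plus_distr_r.
rewrite big_split /= (bigD1 xb (proj1 xb_best)) (bigD1 xw (proj1 xw_worst)) /=.
rewrite !eqxx !big1 => [|x /andP[_ /negbTE ->]|x /andP[_ /negbTE ->]] //; [field | ring | ring].
Qed.

Lemma best_worst_lottery_on b X : X != set0 -> lottery_on (best_worst_lottery b X) X.
Proof.
move=> X0; split=> [x _|].
  by rewrite /best_worst_lottery; case: ifP; case: ifP; lra.
have [xb xb_best] := exists_best b X0; have [xw xw_worst] := exists_worst b X0.
have := expect_best_worst_lottery (fun=> 1) xb_best xw_worst.
by rewrite /expect; under eq_bigr do rewrite Rmult_1_r; move=> ->; lra.
Qed.

Lemma expect_best_worst_lottery_le b X Y u :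
  X != set0 -> Y != set0 -> consistent_utility b u ->
  optimist_geq b X Y -> pessimist_geq b X Y ->
  expect (best_worst_lottery b Y) Y u <= expect (best_worst_lottery b X) X u.
Proof.
move=> X0 Y0 u_cons opt pes.
have [xb xb_best] := exists_best b X0; have [xw xw_worst] := exists_worst b X0.
have [yb yb_best] := exists_best b Y0; have [yw yw_worst] := exists_worst b Y0.
rewrite (expect_best_worst_lottery _ xb_best xw_worst).
rewrite (expect_best_worst_lottery _ yb_best yw_worst).
have := consistent_utility_succeq u_cons (opt _ _ xb_best yb_best).
have := consistent_utility_succeq u_cons (pes _ _ xw_worst yw_worst).
lra.
Qed.

End Ballots.

Section Representation.
Variables (V A : finType) (F : SCC V A).
Hypothesis F_nonempty : scc_nonempty F.

Lemma best_worst_representation : SPO F -> SPP F -> has_prob_representation F.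
Proof.
move=> spo spp; exists (fun i P x X => best_worst_lottery (P i) X x).
split; [|split; [|split]].
- by move=> i P x X; rewrite /best_worst_lottery; case: ifP; case: ifP; lra.
- by move=> i P X X0; case: (best_worst_lottery_on (P i) X0).
- move=> i P X a _ _ [/bestbP|/worstbP] a_ext;
    rewrite /= /best_worst_lottery a_ext; case: ifP; lra.
- move=> i P b' u u_cons; apply/Rle_ge/expect_best_worst_lottery_le => //.
Qed.

Lemma representation_SPO_SPP : has_prob_representation F -> SPO F /\ SPP F.
Proof.
case=> p [p01 [p_sum [p_pos p_exp]]].
have p_lot i P X : X != set0 -> lottery_on (fun x => p i P x X) X.
  by move=> X0; split=> [x _|]; [case: (p01 i P x X) | exact: p_sum].
have exp_le i P b' u : consistent_utility (P i) u ->
    expect (fun x => p i P x (F (upd P i b'))) (F (upd P i b')) u <=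
    expect (fun x => p i P x (F P)) (F P) u.
  by move=> u_cons; exact: Rge_le (p_exp i P b' u u_cons).
split=> i P b'.
- apply: optimist_geq_of_expect (p_lot i P _ (F_nonempty P)) _ _ (exp_le i P b').
  + by move=> y _; case: (p01 i P y (F (upd P i b'))).
  + by move=> y y_best; apply: p_pos => //; [exact: proj1 y_best | left].
- apply: pessimist_geq_of_expect _ _ (p_lot i P _ (F_nonempty _)) (exp_le i P b').
  + by move=> x _; case: (p01 i P x (F P)).
  + by move=> x x_worst; apply: p_pos => //; [exact: proj1 x_worst | right].
Qed.

End Representation.

Theorem mainTheorem1 (V A : finType) (F : SCC V A) (HF : scc_nonempty F) :
  (onto_singletons F /\ SPO F /\ SPP F) <->
  (onto_singletons F /\ has_prob_representation F).
Proof.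
split=> -[onto rest]; split=> //.
- by case: rest; exact: best_worst_representation.
- exact: representation_SPO_SPP.
Qed.
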